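(* Let $\mathcal{H},\mathcal{K}$ be Hilbert spaces, let $(\omega_k)_{k\ge0}$ be a sequence of strictly positive weights, set $\beta(0)=1$ and $\beta(n)=\omega_0\cdots\omega_{n-1}$ for $n\ge1$, and suppose $$\sup_{n,k\ge0}\frac{\beta(n+k)}{\beta(n)}<\infty.$$ Let $S_\omega\in\mathcal{B}(\ell^2(\mathcal{H}))$ be the unilateral weighted shift $S_\omega(x_0,x_1,\ldots)=(0,\omega_0x_0,\omega_1x_1,\ldots)$. Let $T\in\mathcal{B}(\mathcal{K})$ be similar to a contraction and let $X\in\mathcal{B}(\ell^2(\mathcal{H}),\mathcal{K})$. Put $$R(X)=\begin{bmatrix}T & X\\ 0 & S_\omega\end{bmatrix},\qquad R(0)=T\oplus S_\omega\qquad\text{in }\mathcal{B}(\mathcal{K}\oplus\ell^2(\mathcal{H})).$$ Suppose there is a constant $s$ such that for every $N\in\mathbb{N}$ and all $x_0,\ldots,x_N\in\mathcal{H}_0$, $$\Big\|\sum_{n=0}^{N}\frac{1}{\beta(n)}\big(R(X)^n-R(0)^n\big)x_n\Big\|\le s\Big(\sum_{n=0}^N\|x_n\|^2\Big)^{1/2},$$ where $\mathcal{H}_0=\{0\}\oplus(\mathcal{H}\oplus\{0\}\oplus\{0\}\oplus\cdots)\subset\mathcal{K}\oplus\ell^2(\mathcal{H})$ (i.e. $R(X)$ is $\beta$-quadratically near $R(0)$ modulo $\mathcal{H}$). Then $R(X)$ is similar to a contraction.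
   Context: Two operators $A,C$ on a Hilbert space $\mathcal{E}$ are $\beta$-quadratically near modulo a subspace $\mathcal{E}_0$ if there is $s$ with $\|\sum_{n=0}^N\beta(n)^{-1}(A^n-C^n)x_n\|\le s(\sum_{n=0}^N\|x_n\|^2)^{1/2}$ for all $N$ and all $x_0,\ldots,x_N\in\mathcal{E}_0$. An operator is similar to a contraction if it is conjugate by an invertible operator to an operator of norm at most 1. *)

From mathcomp Require Import all_boot all_algebra.
From mathcomp Require Import boolp classical_sets reals functions.
From mathcomp.real_closed Require Export complex.
Set Implicit Arguments. Unset Strict Implicit. Unset Printing Implicit Defensive.
Import GRing.Theory Num.Theory.
Local Open Scope ring_scope.

Definition inner_product (R : realType) (V : lmodType R[i]) (ip : V -> V -> R[i]) : Prop :=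
  [/\ (forall (a : R[i]) (x y z : V), ip (a *: x + y) z = a * ip x z + ip y z),
      (forall x y : V, ip y x = (ip x y)^*),
      (forall x : V, 0 <= ip x x) &
      (forall x : V, ip x x = 0 -> x = 0)].

Definition ipnorm (R : realType) (V : lmodType R[i]) (ip : V -> V -> R[i]) (x : V) : R :=
  Num.sqrt (complex.Re (ip x x)).

Definition ip_complete (R : realType) (V : lmodType R[i]) (ip : V -> V -> R[i]) : Prop :=
  forall u : nat -> V,
    (forall e : R, 0 < e -> exists N, forall m n, (N <= m)%N -> (N <= n)%N ->
        ipnorm ip (u m - u n) < e) ->
    exists l : V, forall e : R, 0 < e -> exists N, forall n, (N <= n)%N ->
        ipnorm ip (u n - l) < e.

Definition hilbert_space (R : realType) (V : lmodType R[i]) (ip : V -> V -> R[i]) : Prop :=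
  inner_product ip /\ ip_complete ip.

(** Bounded linear operators between (subspaces, given by predicates, of)
    normed spaces.  [P] is the carrier subspace, [nrm] the norm. *)
Definition bounded_op (R : realType) (U V : lmodType R[i])
    (PU : U -> Prop) (nU : U -> R) (PV : V -> Prop) (nV : V -> R) (A : U -> V) : Prop :=
  [/\ (forall u, PU u -> PV (A u)),
      (forall (a : R[i]) u w, PU u -> PU w -> A (a *: u + w) = a *: A u + A w) &
      exists c : R, forall u, PU u -> nV (A u) <= c * nU u].

Definition similar_to_contraction (R : realType) (V : lmodType R[i])
    (P : V -> Prop) (nrm : V -> R) (A : V -> V) : Prop :=
  exists L Linv : V -> V,
    [/\ bounded_op P nrm P nrm L, bounded_op P nrm P nrm Linv,
        (forall v, P v -> Linv (L v) = v /\ L (Linv v) = v) &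
        (forall v, P v -> nrm (Linv (A (L v))) <= nrm v)].

Definition l2_mem (R : realType) (H : lmodType R[i]) (ip : H -> H -> R[i])
    (x : nat -> H) : Prop :=
  exists M : R, forall N, \sum_(n < N) ipnorm ip (x n) ^+ 2 <= M.

Definition l2_sqnorm (R : realType) (H : lmodType R[i]) (ip : H -> H -> R[i])
    (x : nat -> H) : R :=
  sup [set r : R | exists N, r = \sum_(n < N) ipnorm ip (x n) ^+ 2]%classic.

Definition l2_norm (R : realType) (H : lmodType R[i]) (ip : H -> H -> R[i])
    (x : nat -> H) : R := Num.sqrt (l2_sqnorm ip x).

Definition sum_mem (R : realType) (K H : lmodType R[i]) (ipH : H -> H -> R[i])
    (v : K * (nat -> H)) : Prop := l2_mem ipH v.2.

Definition sum_norm (R : realType) (K H : lmodType R[i])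
    (ipK : K -> K -> R[i]) (ipH : H -> H -> R[i]) (v : K * (nat -> H)) : R :=
  Num.sqrt (ipnorm ipK v.1 ^+ 2 + l2_sqnorm ipH v.2).

Definition beta (R : realType) (w : nat -> R) (n : nat) : R := \prod_(k < n) w k.

Definition wshift (R : realType) (H : lmodType R[i]) (w : nat -> R) (x : nat -> H) :
    nat -> H :=
  fun n => if n is n'.+1 then ((w n')%:C)%C *: x n' else 0.

Definition RX (R : realType) (K H : lmodType R[i]) (T : K -> K)
    (X : (nat -> H) -> K) (w : nat -> R) (v : K * (nat -> H)) : K * (nat -> H) :=
  (T v.1 + X v.2, wshift w v.2).

Definition R0 (R : realType) (K H : lmodType R[i]) (T : K -> K)
    (w : nat -> R) (v : K * (nat -> H)) : K * (nat -> H) :=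
  (T v.1, wshift w v.2).

Definition embH0 (R : realType) (K H : lmodType R[i]) (h : H) : K * (nat -> H) :=
  (0, fun n => if n == 0%N then h else 0).

From mathcomp Require Import all_boot all_order all_algebra.
From mathcomp Require Import boolp classical_sets reals functions.
From mathcomp.real_closed Require Import complex.
From mathcomp Require Import ring lra.
Set Implicit Arguments. Unset Strict Implicit. Unset Printing Implicit Defensive.
Import Order.TTheory GRing.Theory Num.Theory.
Local Open Scope ring_scope.

(* The hypothesis bounds the partial sums
   [Y_N x = sum_(n < N) beta(n)^-1 (R(X)^n x_n)_K] by [s ||x||], so they converge to a
   bounded operator [Y : l^2(H) -> K]; comparing [Y_(N+1) (S_w x)] with [Y_N x] gives
   [Y S_w = T Y + X].  Hence if [L_T], [L_S] are similarities taking [T] and [S_w] to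
   contractions, [L = [[L_T, Y L_S], [0, L_S]]] takes [R(X)] to the contraction
   [L_T^-1 T L_T (+) L_S^-1 S_w L_S].  For [S_w] take [L_S = diag(d_n)] with
   [d_n = max_(m <= n) beta(n) / beta(m)] (recursively [d_(n+1) = max(1, w_n d_n)]),
   which the bound on [beta(n + k) / beta(n)] keeps bounded; then
   [d_(n+1)^-1 w_n d_n <= 1]. *)

Section InnerProductSpace.
Variables (R : realType) (V : lmodType R[i]) (ip : V -> V -> R[i]).
Hypothesis hip : inner_product ip.

Lemma ipDl x y z : ip (x + y) z = ip x z + ip y z.
Proof. by case: hip => lin _ _ _; rewrite -{1}[x]scale1r lin mul1r. Qed.

Lemma ip0l z : ip 0 z = 0.
Proof. by apply: (addrI (ip 0 z)); rewrite -ipDl !addr0. Qed.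

Lemma ipZl a x z : ip (a *: x) z = a * ip x z.
Proof. by case: hip => lin _ _ _; rewrite -[a *: x]addr0 lin ip0l addr0. Qed.

Lemma ipDr x y z : ip z (x + y) = ip z x + ip z y.
Proof. by case: hip => _ sym _ _; rewrite (sym x z) (sym y z) sym ipDl rmorphD. Qed.

Lemma ipZr a x z : ip z (a *: x) = a^* * ip z x.
Proof. by case: hip => _ sym _ _; rewrite (sym x z) sym ipZl rmorphM. Qed.

Lemma ip0r z : ip z 0 = 0.
Proof. by rewrite -(scale0r 0) ipZr rmorph0 mul0r. Qed.

Lemma ip_selfE x : ip x x = (ipnorm ip x ^+ 2)%:C%C.
Proof.
case: hip => _ _ /(_ x) + _; rewrite /ipnorm; case: (ip x x) => a b.
by rewrite lecE /= => /andP [/eqP -> a0]; rewrite sqr_sqrtr.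
Qed.

Lemma ipnorm_ge0 x : 0 <= ipnorm ip x.
Proof. exact: sqrtr_ge0. Qed.

Lemma ipnorm0_eq0 x : ipnorm ip x = 0 -> x = 0.
Proof. by case: hip => _ _ _ def /eqP nx0; apply: def; rewrite ip_selfE (eqP nx0) expr0n. Qed.

Lemma ipnorm0 : ipnorm ip 0 = 0.
Proof. by rewrite /ipnorm ip0r sqrtr0. Qed.

Lemma ipnormZ a x : ipnorm ip (a *: x) = complex.Re `|a| * ipnorm ip x.
Proof.
rewrite /ipnorm ipZl ipZr ip_selfE mulrA -normCK normc_def -rmorphXn -rmorphM /=.
by rewrite -exprMn !sqrtr_sqr !ger0_norm ?mulr_ge0 ?sqrtr_ge0 ?ipnorm_ge0.
Qed.

Lemma ipnormZr (r : R) x : ipnorm ip (r%:C%C *: x) = `|r| * ipnorm ip x.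
Proof. by rewrite ipnormZ normc_def /= expr0n addr0 sqrtr_sqr. Qed.

Lemma ipnormN x : ipnorm ip (- x) = ipnorm ip x.
Proof. by rewrite -scaleN1r -(rmorphN1 (real_complex R)) ipnormZr normrN1 mul1r. Qed.

Lemma ipdistC x y : ipnorm ip (x - y) = ipnorm ip (y - x).
Proof. by rewrite -ipnormN opprB. Qed.

Lemma ipnorm_sqr x : ipnorm ip x ^+ 2 = complex.Re (ip x x).
Proof. by rewrite ip_selfE. Qed.

Lemma ipnormD_sqr x y :
  ipnorm ip (x + y) ^+ 2 =
  ipnorm ip x ^+ 2 + 2 * complex.Re (ip x y) + ipnorm ip y ^+ 2.
Proof.
case: hip => _ sym _ _.
rewrite !ipnorm_sqr ipDl !ipDr (sym x y) !raddfD /=.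
by case: (ip x y) => p q /=; ring.
Qed.

Lemma Re_ipZ (r s : R) x y :
  complex.Re (ip (r%:C%C *: x) (s%:C%C *: y)) = r * s * complex.Re (ip x y).
Proof. by rewrite ipZl ipZr; case: (ip x y) => p q /=; ring. Qed.

Lemma Re_ip_le x y : complex.Re (ip x y) <= ipnorm ip x * ipnorm ip y.
Proof.
have [x0|nx0] := eqVneq (ipnorm ip x) 0.
  by rewrite (ipnorm0_eq0 x0) ip0l ipnorm0 mul0r.
have [y0|ny0] := eqVneq (ipnorm ip y) 0.
  by rewrite (ipnorm0_eq0 y0) ip0r ipnorm0 mulr0.
have ac_gt0 : 0 < ipnorm ip x * ipnorm ip y by rewrite mulr_gt0 // lt0r ?nx0 ?ny0 ipnorm_ge0.
(* [0 <= ||c x - a y||^2 = 2 a c (a c - Re <x, y>)], with [a = ||x||], [c = ||y||]. *)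
have := sqr_ge0 (ipnorm ip ((ipnorm ip y)%:C%C *: x + (- ipnorm ip x)%:C%C *: y)).
rewrite ipnormD_sqr !ipnormZr Re_ipZ normrN !ger0_norm ?ipnorm_ge0 //.
nra.
Qed.

Lemma ler_ipnormD x y : ipnorm ip (x + y) <= ipnorm ip x + ipnorm ip y.
Proof.
rewrite -ler_sqr ?nnegrE ?addr_ge0 ?ipnorm_ge0 // ipnormD_sqr.
have := Re_ip_le x y; lra.
Qed.

Definition ipcvg (u : nat -> V) (l : V) :=
  forall e : R, 0 < e -> exists N, forall n, (N <= n)%N -> ipnorm ip (u n - l) < e.

Lemma ipcvg_unique u l1 l2 : ipcvg u l1 -> ipcvg u l2 -> l1 = l2.
Proof.
move=> ul1 ul2; apply/eqP; rewrite -subr_eq0; apply/eqP/ipnorm0_eq0/eqP.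
rewrite eq_le ipnorm_ge0 andbT; apply/ler_addgt0Pr => e e0; rewrite add0r.
have e2 : 0 < e / 2 by rewrite divr_gt0.
have [N1 lt1] := ul1 _ e2; have [N2 lt2] := ul2 _ e2.
have := lt1 _ (leq_maxl N1 N2); have := lt2 _ (leq_maxr N1 N2).
have := ler_ipnormD (l1 - u (maxn N1 N2)) (u (maxn N1 N2) - l2).
rewrite addrA subrK (ipdistC l1 (u _)); lra.
Qed.

Lemma ipcvgD u v l m : ipcvg u l -> ipcvg v m -> ipcvg (fun n => u n + v n) (l + m).
Proof.
move=> ul vm e e0; have e2 : 0 < e / 2 by rewrite divr_gt0.
have [N1 lt1] := ul _ e2; have [N2 lt2] := vm _ e2.
exists (maxn N1 N2) => n; rewrite geq_max => /andP [/lt1 + /lt2].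
have := ler_ipnormD (u n - l) (v n - m); rewrite addrACA -opprD; lra.
Qed.

Lemma ipcvgS u l : ipcvg u l -> ipcvg (fun n => u n.+1) l.
Proof. by move=> ul e /ul [N lt]; exists N => n /leqW /lt. Qed.

Lemma ipcvg_norm_le u l (B : R) :
  ipcvg u l -> (forall n, ipnorm ip (u n) <= B) -> ipnorm ip l <= B.
Proof.
move=> ul uB; apply/ler_addgt0Pr => e /ul [N /(_ N (leqnn N))].
have := ler_ipnormD (u N) (l - u N); rewrite addrC subrK (ipdistC l).
have := uB N; lra.
Qed.

End InnerProductSpace.

Lemma ipcvg_lipschitz (R : realType) (V W : lmodType R[i])
    (ipV : V -> V -> R[i]) (ipW : W -> W -> R[i]) u l (f : nat -> W) m (c : R) :
  (forall n, ipnorm ipW (f n - m) <= c * ipnorm ipV (u n - l)) ->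
  ipcvg ipV u l -> ipcvg ipW f m.
Proof.
move=> fu ul e e0; have c1 : 0 < `|c| + 1 by rewrite ltr_pwDr ?normr_ge0.
have [N lt] := ul _ (divr_gt0 e0 c1); exists N => n /lt ulN.
apply: (le_lt_trans (fu n)); apply: (le_lt_trans (ler_wpM2r (ipnorm_ge0 _ _) (ler_norm c))).
have : `|c| * ipnorm ipV (u n - l) <= `|c| * (e / (`|c| + 1)) by rewrite ler_wpM2l ?normr_ge0 ?ltW.
have : `|c| * (e / (`|c| + 1)) < e by rewrite mulrA ltr_pdivrMr // mulrDr mulr1 mulrC ltrDl.
lra.
Qed.

Lemma ipcvgZ (R : realType) (V : lmodType R[i]) (ip : V -> V -> R[i]) :
  inner_product ip -> forall u l (a : R[i]),
  ipcvg ip u l -> ipcvg ip (fun n => a *: u n) (a *: l).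
Proof.
move=> hip u l a; apply: (ipcvg_lipschitz (c := complex.Re `|a|)) => n.
by rewrite -scalerBr ipnormZ.
Qed.

Section SquareSummable.
Variables (R : realType) (H : lmodType R[i]) (ip : H -> H -> R[i]).
Hypothesis hip : inner_product ip.
Implicit Types (x y : nat -> H) (N M : nat).

Definition l2_psum x N := \sum_(n < N) ipnorm ip (x n) ^+ 2.

Lemma l2_psumS x N : l2_psum x N.+1 = l2_psum x N + ipnorm ip (x N) ^+ 2.
Proof. by rewrite /l2_psum big_ord_recr. Qed.

Lemma l2_psum_ge0 x N : 0 <= l2_psum x N.
Proof. by apply: sumr_ge0 => n _; rewrite sqr_ge0. Qed.

Lemma le_l2_psum x N M : (N <= M)%N -> l2_psum x N <= l2_psum x M.
Proof.
move/subnK <-; elim: (M - N)%N => [|k IH]; first by rewrite add0n.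
by rewrite addSn l2_psumS ler_wpDr ?sqr_ge0.
Qed.

Lemma l2_has_sup x :
  l2_mem ip x -> has_sup [set r | exists N, r = l2_psum x N]%classic.
Proof.
case=> B xB; split; first by exists 0, 0%N; rewrite /l2_psum big_ord0.
by exists B => _ [N ->]; exact: xB.
Qed.

Lemma l2_psum_le_sqnorm x N : l2_mem ip x -> l2_psum x N <= l2_sqnorm ip x.
Proof. by move=> /l2_has_sup/sup_upper_bound; apply; exists N. Qed.

Lemma l2_sqnorm_ge0 x : l2_mem ip x -> 0 <= l2_sqnorm ip x.
Proof. by move=> /(l2_psum_le_sqnorm 0); apply: le_trans; rewrite l2_psum_ge0. Qed.

Lemma l2_norm_ge0 x : 0 <= l2_norm ip x.
Proof. exact: sqrtr_ge0. Qed.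

Lemma l2_psum_bounded x (B : R) :
  (forall N, l2_psum x N <= B) -> l2_mem ip x /\ l2_sqnorm ip x <= B.
Proof.
move=> xB; split; first by exists B.
apply: ge_sup => [|_ [N ->]]; last exact: xB.
by exists 0, 0%N; rewrite /l2_psum big_ord0.
Qed.

Lemma l2_psum_cvg x e : l2_mem ip x -> 0 < e ->
  exists N, forall M, (N <= M)%N -> l2_sqnorm ip x - l2_psum x M < e.
Proof.
move=> x2 e0; have [_ [N ->] lt] := sup_adherent e0 (l2_has_sup x2).
exists N => M /(le_l2_psum x); move: lt; rewrite /l2_sqnorm -/(l2_psum x _); lra.
Qed.

Lemma l2_dominated x y (C : R) : l2_mem ip x -> 0 <= C ->
    (forall n, ipnorm ip (y n) <= C * ipnorm ip (x n)) ->
  l2_mem ip y /\ l2_norm ip y <= C * l2_norm ip x.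
Proof.
move=> x2 C0 yx; have [y2 yC] : l2_mem ip y /\ l2_sqnorm ip y <= C ^+ 2 * l2_sqnorm ip x.
  apply: l2_psum_bounded => N; apply: (@le_trans _ _ (C ^+ 2 * l2_psum x N)).
    rewrite /l2_psum mulr_sumr; apply: ler_sum => n _.
    by rewrite -exprMn ler_sqr ?nnegrE ?mulr_ge0 ?ipnorm_ge0.
  by rewrite ler_wpM2l ?sqr_ge0 ?l2_psum_le_sqnorm.
split => //; rewrite -(ger0_norm C0) -sqrtr_sqr -sqrtrM ?sqr_ge0 //.
exact: ler_wsqrtr.
Qed.

Lemma l2_dominated_shift x y (C : R) : l2_mem ip x -> 0 <= C -> y 0%N = 0 ->
    (forall n, ipnorm ip (y n.+1) <= C * ipnorm ip (x n)) ->
  l2_mem ip y /\ l2_norm ip y <= C * l2_norm ip x.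
Proof.
move=> x2 C0 y0 yx; have [yS2 yC] := l2_dominated x2 C0 yx.
have [y2 le_y] : l2_mem ip y /\ l2_sqnorm ip y <= l2_sqnorm ip (fun n => y n.+1).
  apply: l2_psum_bounded => -[|N]; first by rewrite /l2_psum big_ord0 l2_sqnorm_ge0.
  by rewrite /l2_psum big_ord_recl y0 ipnorm0 // expr0n add0r l2_psum_le_sqnorm.
by split => //; apply: le_trans yC; apply: ler_wsqrtr.
Qed.

Lemma l2_zero : l2_mem ip (0 : nat -> H) /\ l2_norm ip (0 : nat -> H) = 0.
Proof.
have psum0 N : l2_psum 0 N = 0.
  by rewrite /l2_psum big1 // => n _; rewrite ipnorm0 // expr0n.
have [z2 z0] : l2_mem ip 0 /\ l2_sqnorm ip 0 <= 0.
  by apply: l2_psum_bounded => N; rewrite psum0.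
split => //; apply/eqP; rewrite sqrtr_eq0 //.
Qed.

Lemma l2_memZD a x y : l2_mem ip x -> l2_mem ip y -> l2_mem ip (a *: x + y).
Proof.
move=> x2 y2; set c := complex.Re `|a|.
have c0 : 0 <= c by rewrite /c normc_def sqrtr_ge0.
exists (2 * (c ^+ 2 * l2_sqnorm ip x + l2_sqnorm ip y)) => N.
apply: (@le_trans _ _ (2 * (c ^+ 2 * l2_psum x N + l2_psum y N))); last first.
  by rewrite ler_wpM2l // lerD ?ler_wpM2l ?sqr_ge0 ?l2_psum_le_sqnorm.
rewrite /l2_psum mulr_sumr -big_split mulr_sumr; apply: ler_sum => n _ /=.
have := ler_ipnormD hip (a *: x n) (y n); rewrite ipnormZ // -/c.
have := ipnorm_ge0 ip (a *: x n + y n).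
have := ipnorm_ge0 ip (x n); have := ipnorm_ge0 ip (y n).
have := sqr_ge0 (c * ipnorm ip (x n) - ipnorm ip (y n)); nra.
Qed.

Lemma l2_finite_support x N : (forall n, (N <= n)%N -> x n = 0) -> l2_mem ip x.
Proof.
move=> x0; exists (l2_psum x N) => M; change (l2_psum x M <= l2_psum x N).
elim: M => [|M IH]; first exact: le_l2_psum.
have [MN|NM] := ltnP M N; first exact: le_l2_psum.
by rewrite l2_psumS x0 // ipnorm0 // expr0n addr0.
Qed.

Definition single n (h : H) : nat -> H := fun m => if m == n then h else 0.
Definition trunc N x : nat -> H := fun m => if (m < N)%N then x m else 0.
Definition tail N x : nat -> H := fun m => if (m < N)%N then 0 else x m.

Lemma l2_single n h : l2_mem ip (single n h).
Proof.
apply: (@l2_finite_support _ n.+1) => m; rewrite /single.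
by case: eqP => // ->; rewrite ltnn.
Qed.

Lemma l2_trunc N x : l2_mem ip (trunc N x).
Proof. by apply: (@l2_finite_support _ N) => m; rewrite /trunc ltnNge => ->. Qed.

Lemma truncS N x : trunc N.+1 x = trunc N x + single N (x N).
Proof.
apply: funext => m; change (trunc N.+1 x m = trunc N x m + single N (x N) m).
rewrite /trunc /single ltnS leq_eqVlt.
by case: (eqVneq m N) => [->|_]; rewrite ?ltnn ?add0r ?addr0.
Qed.

Lemma trunc_tail N x : x = trunc N x + tail N x.
Proof.
apply: funext => m; change (x m = trunc N x m + tail N x m).
by rewrite /trunc /tail; case: ltnP; rewrite ?addr0 ?add0r.
Qed.

Lemma l2_psum_tail N x M : l2_psum (tail N x) M + l2_psum x N = l2_psum x (maxn M N).
Proof.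
elim: M => [|M IH]; first by rewrite /l2_psum big_ord0 add0r max0n.
rewrite l2_psumS addrAC IH /tail; case: ltnP => [MN|NM].
  by rewrite ipnorm0 // expr0n addr0 !(maxn_idPr _) // ltnW.
by rewrite !(maxn_idPl _) ?(leqW NM) // l2_psumS.
Qed.

Lemma l2_tail N x : l2_mem ip x ->
  l2_mem ip (tail N x) /\ l2_sqnorm ip (tail N x) <= l2_sqnorm ip x - l2_psum x N.
Proof.
move=> x2; apply: l2_psum_bounded => M; rewrite lerBrDr l2_psum_tail.
exact: l2_psum_le_sqnorm.
Qed.

Lemma l2_tail_small x (c e : R) : l2_mem ip x -> 0 <= c -> 0 < e ->
  exists N, forall n, (N <= n)%N -> c * l2_norm ip (tail n x) < e.
Proof.
move=> x2 c0 e0; have c1 : 0 < c + 1 by rewrite ltr_wpDl.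
set d := e / (c + 1); have d0 : 0 < d by rewrite divr_gt0.
have [N small] := l2_psum_cvg x2 (exprn_gt0 2 d0).
exists N => n /small lt; have [_ le] := l2_tail n x2.
have : l2_norm ip (tail n x) < d.
  rewrite -(gtr0_norm d0) -sqrtr_sqr ltr_sqrt ?exprn_gt0 //.
  exact: le_lt_trans le lt.
have : (c + 1) * d = e by rewrite /d mulrC divfK ?gt_eqF.
have := l2_norm_ge0 (tail n x); set t := l2_norm ip _; nra.
Qed.

Lemma l2_psum_le_norm x N : l2_mem ip x -> Num.sqrt (l2_psum x N) <= l2_norm ip x.
Proof. by move=> x2; apply/ler_wsqrtr/l2_psum_le_sqnorm. Qed.

End SquareSummable.

Definition linear_on (R : realType) (U V : lmodType R[i]) (P : U -> Prop) (A : U -> V) :=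
  forall (a : R[i]) u w, P u -> P w -> A (a *: u + w) = a *: A u + A w.

Section LinearOn.
Variables (R : realType) (U V : lmodType R[i]) (P : U -> Prop) (A : U -> V).
Hypotheses (linA : linear_on P A) (P0 : P 0).

Lemma linear_on0 : A 0 = 0.
Proof.
by apply: (addrI (A 0)); rewrite addr0 -{1}(scale1r (A 0)) -linA // scaler0 addr0.
Qed.

Lemma linear_onD u w : P u -> P w -> A (u + w) = A u + A w.
Proof. by move=> Pu Pw; rewrite -[u]scale1r linA // !scale1r. Qed.

Lemma linear_onZ a u : P u -> A (a *: u) = a *: A u.
Proof. by move=> Pu; rewrite -[a *: u]addr0 linA // linear_on0 addr0. Qed.

Lemma linear_onB u w : P u -> P w -> A (u - w) = A u - A w.
Proof. by move=> Pu Pw; rewrite addrC -scaleN1r linA // scaleN1r addrC. Qed.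

End LinearOn.

Lemma sqrt_sum_sqr_le (R : rcfType) (x y : R) :
  0 <= x -> 0 <= y -> Num.sqrt (x ^+ 2 + y ^+ 2) <= x + y.
Proof.
move=> x0 y0; rewrite -ler_sqr ?nnegrE ?sqrtr_ge0 ?addr_ge0 //.
by rewrite sqr_sqrtr ?addr_ge0 ?sqr_ge0 // sqrrD lerD2r ler_wpDr // mulrn_wge0 ?mulr_ge0.
Qed.

Lemma le_sqrt_sum_sqr (R : rcfType) (x y : R) : 0 <= x -> x <= Num.sqrt (x ^+ 2 + y ^+ 2).
Proof.
move=> x0; rewrite -ler_sqr ?nnegrE ?sqrtr_ge0 //.
by rewrite sqr_sqrtr ?addr_ge0 ?sqr_ge0 // lerDl sqr_ge0.
Qed.

Section DirectSum.
Variables (R : realType) (K H : lmodType R[i]).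
Variables (ipK : K -> K -> R[i]) (ipH : H -> H -> R[i]).
Implicit Types u v : K * (nat -> H).

Lemma sum_normE v : l2_mem ipH v.2 ->
  sum_norm ipK ipH v = Num.sqrt (ipnorm ipK v.1 ^+ 2 + l2_norm ipH v.2 ^+ 2).
Proof. by move=> v2; rewrite /sum_norm /l2_norm (sqr_sqrtr (l2_sqnorm_ge0 v2)). Qed.

Lemma sum_norm_le u v : l2_mem ipH u.2 -> l2_mem ipH v.2 ->
    ipnorm ipK u.1 <= ipnorm ipK v.1 -> l2_norm ipH u.2 <= l2_norm ipH v.2 ->
  sum_norm ipK ipH u <= sum_norm ipK ipH v.
Proof.
move=> u2 v2 le1 le2; rewrite !sum_normE //; apply/ler_wsqrtr/lerD.
  by rewrite ler_sqr ?nnegrE ?ipnorm_ge0.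
by rewrite ler_sqr ?nnegrE ?sqrtr_ge0.
Qed.

Lemma sum_norm_le_lin u v (p q r : R) :
    l2_mem ipH u.2 -> l2_mem ipH v.2 -> 0 <= p -> 0 <= q -> 0 <= r ->
    ipnorm ipK u.1 <= p * ipnorm ipK v.1 + q * l2_norm ipH v.2 ->
    l2_norm ipH u.2 <= r * l2_norm ipH v.2 ->
  sum_norm ipK ipH u <= (p + q + r) * sum_norm ipK ipH v.
Proof.
move=> u2 v2 p0 q0 r0 le1 le2; rewrite !sum_normE //.
apply: le_trans (sqrt_sum_sqr_le (ipnorm_ge0 _ _) (l2_norm_ge0 _ _)) _.
have a_le := le_sqrt_sum_sqr (l2_norm ipH v.2) (ipnorm_ge0 ipK v.1).
have b_le := le_sqrt_sum_sqr (ipnorm ipK v.1) (l2_norm_ge0 ipH v.2).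
rewrite addrC in b_le; have := sqrtr_ge0 (ipnorm ipK v.1 ^+ 2 + l2_norm ipH v.2 ^+ 2).
have := ipnorm_ge0 ipK v.1; have := l2_norm_ge0 ipH v.2; nra.
Qed.

End DirectSum.

Section WeightedShift.
Variables (R : realType) (w : nat -> R).
Hypothesis w_pos : forall k, 0 < w k.

Lemma beta0 : beta w 0 = 1.
Proof. by rewrite /beta big_ord0. Qed.

Lemma betaS n : beta w n.+1 = beta w n * w n.
Proof. by rewrite /beta big_ord_recr. Qed.

Lemma beta_gt0 n : 0 < beta w n.
Proof. by apply: prodr_gt0 => k _; apply: w_pos. Qed.

Lemma weight_le_ratio_bound (M : R) :
  (forall n k, beta w (n + k) / beta w n <= M) -> forall n, w n <= M.
Proof.
move=> wM n; have := wM n 1%N.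
by rewrite addn1 betaS mulrAC divff ?mul1r // gt_eqF ?beta_gt0.
Qed.

Fixpoint wshift_scale n : R :=
  if n is n'.+1 then Num.max 1 (w n' * wshift_scale n') else 1.

Lemma wshift_scaleS n : wshift_scale n.+1 = Num.max 1 (w n * wshift_scale n).
Proof. by []. Qed.

Lemma wshift_scale_ge1 n : 1 <= wshift_scale n.
Proof. by case: n => // n; rewrite wshift_scaleS le_max lexx. Qed.

Lemma wshift_scale_gt0 n : 0 < wshift_scale n.
Proof. exact: lt_le_trans ltr01 (wshift_scale_ge1 n). Qed.

Lemma wshift_scale_step n : w n * wshift_scale n <= wshift_scale n.+1.
Proof. by rewrite wshift_scaleS le_max lexx orbT. Qed.

Lemma wshift_scale_ratio n :
  exists2 m, (m <= n)%N & wshift_scale n = beta w n / beta w m.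
Proof.
elim: n => [|n [m mn IH]]; first by exists 0%N; rewrite // beta0 divr1.
rewrite wshift_scaleS IH; have [le1|lt1] := leP 1 (w n * (beta w n / beta w m)).
  exists m; first exact: leqW.
  by rewrite betaS mulrA [w n * _]mulrC.
exists n.+1 => //; rewrite divff //.
by rewrite gt_eqF ?beta_gt0.
Qed.

Lemma wshift_scale_le (M : R) :
  (forall n k, beta w (n + k) / beta w n <= M) -> forall n, wshift_scale n <= M.
Proof. by move=> wM n; have [m /subnKC <- ->] := wshift_scale_ratio n. Qed.

End WeightedShift.

Section DiagonalAndShift.
Variables (R : realType) (H : lmodType R[i]) (ip : H -> H -> R[i]).
Hypothesis hip : inner_product ip.

Definition diag_scale (d : nat -> R) (x : nat -> H) : nat -> H :=
  fun n => (d n)%:C%C *: x n.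

Lemma diag_scale_bounded d (C : R) : (forall n, `|d n| <= C) ->
  bounded_op (l2_mem ip) (l2_norm ip) (l2_mem ip) (l2_norm ip) (diag_scale d).
Proof.
move=> dC; have C0 : 0 <= C := le_trans (normr_ge0 _) (dC 0%N).
have dom x : l2_mem ip x -> l2_mem ip (diag_scale d x) /\
    l2_norm ip (diag_scale d x) <= C * l2_norm ip x.
  move=> x2; apply: l2_dominated => // n.
  by rewrite /diag_scale ipnormZr // ler_wpM2r ?ipnorm_ge0.
split; [by move=> x /dom [] | | by exists C => x /dom []].
move=> a x y _ _; apply: funext => n; rewrite /diag_scale !fctE.
by rewrite scalerDr !scalerA mulrC.
Qed.

Lemma diag_scaleK d : (forall n, d n != 0) ->
  cancel (diag_scale d) (diag_scale (fun n => (d n)^-1)).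
Proof.
by move=> d0 x; apply: funext => n; rewrite /diag_scale scalerA -rmorphM mulVf ?scale1r.
Qed.

Lemma diag_scaleVK d : (forall n, d n != 0) ->
  cancel (diag_scale (fun n => (d n)^-1)) (diag_scale d).
Proof.
by move=> d0 x; apply: funext => n; rewrite /diag_scale scalerA -rmorphM mulfV ?scale1r.
Qed.

Variable w : nat -> R.
Hypothesis w_pos : forall k, 0 < w k.

Lemma l2_wshift (M : R) x :
  (forall k, w k <= M) -> l2_mem ip x -> l2_mem ip (wshift w x).
Proof.
move=> wM x2; have M0 : 0 <= M := le_trans (ltW (w_pos 0)) (wM 0%N).
suff dom n : ipnorm ip (wshift w x n.+1) <= M * ipnorm ip (x n).
  by case: (l2_dominated_shift hip x2 M0 _ dom).
rewrite /wshift ipnormZr // (ger0_norm (ltW (w_pos n))).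
by rewrite ler_wpM2r ?ipnorm_ge0.
Qed.

Theorem wshift_similar_to_contraction (M : R) :
    (forall n k, beta w (n + k) / beta w n <= M) ->
  similar_to_contraction (l2_mem ip) (l2_norm ip) (wshift w).
Proof.
move=> wM; set e := wshift_scale w.
have e_gt0 n : 0 < e n by apply: wshift_scale_gt0.
have e0 n : e n != 0 by rewrite gt_eqF.
exists (diag_scale e), (diag_scale (fun n => (e n)^-1)); split.
- apply: (@diag_scale_bounded _ M) => n.
  by rewrite (ger0_norm (ltW (e_gt0 n))) wshift_scale_le.
- apply: (@diag_scale_bounded _ 1) => n.
  by rewrite ger0_norm ?invr_ge0 ?(ltW (e_gt0 n)) // invf_le1 ?wshift_scale_ge1.
- by move=> x _; rewrite diag_scaleK ?diag_scaleVK.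
- move=> x x2; rewrite -[l2_norm ip x]mul1r.
  apply: (l2_dominated_shift hip x2 ler01 _ _).2.
    by rewrite /diag_scale /wshift scaler0.
  move=> n; rewrite /diag_scale /wshift !scalerA -!rmorphM ipnormZr //.
  rewrite ler_wpM2r ?ipnorm_ge0 // ger0_norm; last first.
    by rewrite !mulr_ge0 ?invr_ge0 ?(ltW (e_gt0 _)) ?(ltW (w_pos _)).
  by rewrite -mulrA mulrC ler_pdivrMr // mul1r wshift_scale_step.
Qed.

End DiagonalAndShift.

Section Intertwiner.
Variables (R : realType) (H K : lmodType R[i]).
Variables (ipH : H -> H -> R[i]) (ipK : K -> K -> R[i]).
Variables (w : nat -> R) (T : K -> K) (X : (nat -> H) -> K).
Hypotheses (hipH : inner_product ipH) (hK : hilbert_space ipK).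
Hypothesis w_pos : forall k, 0 < w k.
Hypotheses (linT : linear_on (fun _ => True) T) (linX : linear_on (l2_mem ipH) X).

Let hipK : inner_product ipK := hK.1.
Let T0 : T 0 = 0. Proof. exact: linear_on0 linT I. Qed.
Let X0 : X 0 = 0. Proof. exact: linear_on0 linX (l2_zero hipH).1. Qed.

Lemma iter_wshift_single n (h : H) :
  iter n (wshift w) (single 0 h) = (beta w n)%:C%C *: single n h.
Proof.
elim: n => [|n IH]; first by rewrite beta0 scale1r.
rewrite iterS IH; apply: funext => -[|m]; rewrite /wshift /single !fctE ?scaler0 //.
by rewrite eqSS; case: eqP => [->|_]; rewrite ?scaler0 // scalerA -rmorphM betaS mulrC.
Qed.

Definition RXn_fst n (h : H) : K := (iter n (RX T X w) (embH0 K h)).1.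

Lemma RXn_fstS n h :
  RXn_fst n.+1 h = T (RXn_fst n h) + (beta w n)%:C%C *: X (single n h).
Proof.
have iter_snd m v : (iter m (RX T X w) v).2 = iter m (wshift w) v.2.
  by elim: m => //= m ->.
by rewrite /RXn_fst /= iter_snd iter_wshift_single
  (linear_onZ linX (l2_zero hipH).1 _ (l2_single hipH _ _)).
Qed.

Lemma RXn_fst_linear n : linear_on (fun _ => True) (RXn_fst n).
Proof.
elim: n => [a h1 h2 _ _|n IH a h1 h2 _ _]; first by rewrite /RXn_fst /= scaler0 addr0.
have single_lin : single n (a *: h1 + h2) = a *: single n h1 + single n h2.
  by apply: funext => m; rewrite /single !fctE; case: (m == n); rewrite ?scaler0 ?addr0.
have [s1 s2] := (l2_single hipH n h1, l2_single hipH n h2).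
rewrite !RXn_fstS IH // linT // single_lin linX // !scalerDr !scalerA [a * _]mulrC.
by rewrite -!addrA; congr (_ + _); rewrite addrCA.
Qed.

Definition Ysum N (x : nat -> H) : K :=
  \sum_(n < N) ((beta w n)^-1)%:C%C *: RXn_fst n (x n).

Lemma Ysum_linear N : linear_on (fun _ => True) (Ysum N).
Proof.
move=> a u v _ _; rewrite /Ysum scaler_sumr -big_split /=; apply: eq_bigr => n _.
by rewrite !fctE (RXn_fst_linear n) // scalerDr !scalerA mulrC.
Qed.

Lemma Ysum_tail N M x : (N <= M)%N -> Ysum M x = Ysum N x + Ysum M (tail N x).
Proof.
move/subnK <-; elim: (M - N)%N => [|k IH].
  rewrite add0n [Ysum N (tail N x)]big1 ?addr0 // => n _.
  by rewrite /tail ltn_ord (linear_on0 (RXn_fst_linear n)) // scaler0.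
by rewrite addSn /Ysum !big_ord_recr /= -!/(Ysum _ _) IH -addrA /tail ltnNge leq_addl.
Qed.

Lemma Ysum_wshift N x :
  Ysum N.+1 (wshift w x) = T (Ysum N x) + X (trunc N x).
Proof.
elim: N => [|N IH].
  rewrite /Ysum big_ord_recr big_ord0 /= add0r /RXn_fst /= scaler0 big_ord0 T0.
  by rewrite (_ : trunc 0 x = 0) ?X0 ?addr0 //; apply: funext.
have bN : beta w N != 0 by rewrite gt_eqF ?(beta_gt0 w_pos).
have coef : (beta w N.+1)^-1 * w N = (beta w N)^-1.
  by rewrite betaS invfM -mulrA mulVf ?mulr1 ?gt_eqF.
rewrite /Ysum big_ord_recr /= -/(Ysum N.+1 (wshift w x)) IH /wshift.
rewrite (linear_onZ (RXn_fst_linear N.+1)) // scalerA -rmorphM coef RXn_fstS.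
rewrite scalerDr scalerA -rmorphM mulVf // scale1r -(linear_onZ linT) //.
rewrite /Ysum big_ord_recr /= -/(Ysum N x) truncS (linear_onD linT) //.
by rewrite (linear_onD linX (l2_trunc hipH N x) (l2_single hipH N (x N))) addrACA.
Qed.

Lemma near_Ysum_le (s : R) :
    (forall N (x : nat -> H), sum_norm ipK ipH
        (\sum_(n < N.+1) ((beta w n)^-1)%:C%C *:
           (iter n (RX T X w) (embH0 K (x n)) - iter n (R0 T w) (embH0 K (x n))))
      <= s * Num.sqrt (\sum_(n < N.+1) ipnorm ipH (x n) ^+ 2)) ->
  forall N x, ipnorm ipK (Ysum N x) <= `|s| * Num.sqrt (l2_psum ipH x N).
Proof.
move=> near [|N] x.
  by rewrite /Ysum big_ord0 ipnorm0 ?mulr_ge0 ?sqrtr_ge0.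
have iter_R0 n h : iter n (R0 T w) (embH0 K h) = (0, iter n (wshift w) (single 0 h)).
  by elim: n => //= n ->; rewrite /R0 /= T0.
have iter_RX n h : iter n (RX T X w) (embH0 K h) =
    (RXn_fst n h, iter n (wshift w) (single 0 h)).
  rewrite [LHS]surjective_pairing; congr pair.
  by elim: n => //= n ->.
(* on H_0, [R(X)^n - R(0)^n] only has the K-component [RXn_fst n] *)
have := near N x; set V := \sum_(n < N.+1) _.
have -> : V = (Ysum N.+1 x, 0).
  rewrite /V [LHS]surjective_pairing; congr pair.
    rewrite (big_morph (fun p : K * (nat -> H) => p.1) (fun _ _ => erefl) erefl).
    by apply: eq_bigr => n _; rewrite iter_RX iter_R0 /= subr0.
  rewrite (big_morph (fun p : K * (nat -> H) => p.2) (fun _ _ => erefl) erefl).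
  by rewrite big1 // => n _; rewrite iter_RX iter_R0 /= subrr scaler0.
have [z2 z0] := l2_zero hipH.
rewrite sum_normE //= z0 expr0n addr0 sqrtr_sqr ger0_norm ?ipnorm_ge0 // => le_s.
by apply: le_trans le_s _; rewrite ler_wpM2r ?sqrtr_ge0 ?ler_norm.
Qed.

Variable s : R.
Hypotheses (s0 : 0 <= s)
  (Ysum_le : forall N x, ipnorm ipK (Ysum N x) <= s * Num.sqrt (l2_psum ipH x N)).

Lemma Ysum_sub_le N M x : l2_mem ipH x -> (N <= M)%N ->
  ipnorm ipK (Ysum M x - Ysum N x) <= s * l2_norm ipH (tail N x).
Proof.
move=> x2 NM; rewrite (Ysum_tail x NM) addrAC subrr add0r.
apply: le_trans (Ysum_le _ _) _; rewrite ler_wpM2l //.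
exact/l2_psum_le_norm/(l2_tail hipH N x2).1.
Qed.

Lemma Ysum_cvg x : l2_mem ipH x -> exists l, ipcvg ipK (Ysum^~ x) l.
Proof.
move=> x2; apply: hK.2 => e e0.
have [N small] := l2_tail_small hipH x2 s0 (divr_gt0 e0 (ltr0Sn _ 1)).
exists N => m n Nm Nn; have := small N (leqnn N).
have := ler_ipnormD hipK (Ysum m x - Ysum N x) (Ysum N x - Ysum n x).
rewrite addrA subrK (ipdistC hipK (Ysum N x)).
have := Ysum_sub_le x2 Nm; have := Ysum_sub_le x2 Nn; lra.
Qed.

Definition Ylim x : K := xget 0 (ipcvg ipK (Ysum^~ x)).

Lemma Ylim_cvg x : l2_mem ipH x -> ipcvg ipK (Ysum^~ x) (Ylim x).
Proof. by move=> x2; apply: xgetPex; apply: Ysum_cvg. Qed.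

Lemma Ylim_le x : l2_mem ipH x -> ipnorm ipK (Ylim x) <= s * l2_norm ipH x.
Proof.
move=> x2; apply: (ipcvg_norm_le hipK (Ylim_cvg x2)) => N.
by apply: le_trans (Ysum_le N x) _; rewrite ler_wpM2l // l2_psum_le_norm.
Qed.

Lemma Ylim_linear : linear_on (l2_mem ipH) Ylim.
Proof.
move=> a u v u2 v2.
apply: (ipcvg_unique hipK (Ylim_cvg (l2_memZD hipH a u2 v2))).
have -> : Ysum^~ (a *: u + v) = fun N => a *: Ysum N u + Ysum N v.
  by apply: funext => N; rewrite Ysum_linear.
exact: (ipcvgD hipK (ipcvgZ hipK a (Ylim_cvg u2)) (Ylim_cvg v2)).
Qed.

Lemma Ylim_wshift (M cT cX : R) x : (forall k, w k <= M) ->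
    (forall u, ipnorm ipK (T u) <= cT * ipnorm ipK u) ->
    (forall y, l2_mem ipH y -> ipnorm ipK (X y) <= cX * l2_norm ipH y) ->
  l2_mem ipH x -> Ylim (wshift w x) = T (Ylim x) + X x.
Proof.
move=> wM T_le X_le x2.
apply: (ipcvg_unique hipK (ipcvgS (Ylim_cvg (l2_wshift hipH w_pos wM x2)))).
have -> : (fun N => Ysum N.+1 (wshift w x)) = fun N => T (Ysum N x) + X (trunc N x).
  by apply: funext => N; rewrite Ysum_wshift.
apply: (ipcvgD hipK).
  apply: (ipcvg_lipschitz (c := cT) _ (Ylim_cvg x2)) => N.
  by rewrite -(linear_onB linT).
move=> e e0; have [N small] := l2_tail_small hipH x2 (normr_ge0 cX) e0.
exists N => n /small; apply: le_lt_trans; have tail2 := (l2_tail hipH n x2).1.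
rewrite {2}(trunc_tail n x) (linear_onD linX (l2_trunc hipH n x) tail2).
rewrite opprD addrA subrr add0r ipnormN //.
by apply: le_trans (X_le _ tail2) _; rewrite ler_wpM2r ?l2_norm_ge0 ?ler_norm.
Qed.

End Intertwiner.

Lemma bounded_op_nonneg (R : realType) (U V : lmodType R[i])
    (P : U -> Prop) (nU : U -> R) (Q : V -> Prop) (nV : V -> R) (A : U -> V) :
  (forall u, 0 <= nU u) -> bounded_op P nU Q nV A ->
  exists2 c, 0 <= c & forall u, P u -> nV (A u) <= c * nU u.
Proof.
move=> nU0 [_ _ [c Ac]]; exists `|c| => // u Pu.
by apply: le_trans (Ac u Pu) _; rewrite ler_wpM2r ?ler_norm.
Qed.

Section TriangularSimilarity.
Variables (R : realType) (H K : lmodType R[i]).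
Variables (ipH : H -> H -> R[i]) (ipK : K -> K -> R[i]).
Hypothesis hipK : inner_product ipK.
Variables (Y : (nat -> H) -> K) (LT LTi : K -> K) (LS LSi : (nat -> H) -> (nat -> H)).
Local Notation bdK A :=
  (bounded_op (fun _ => True) (ipnorm ipK) (fun _ => True) (ipnorm ipK) A).
Local Notation bdH A :=
  (bounded_op (l2_mem ipH) (l2_norm ipH) (l2_mem ipH) (l2_norm ipH) A).
Local Notation sum_bd A :=
  (bounded_op (sum_mem ipH) (sum_norm ipK ipH) (sum_mem ipH) (sum_norm ipK ipH) A).
Hypothesis Y_bdd : bounded_op (l2_mem ipH) (l2_norm ipH) (fun _ => True) (ipnorm ipK) Y.

Definition block_sim (v : K * (nat -> H)) := (LT v.1 + Y (LS v.2), LS v.2).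
Definition block_sim_inv (v : K * (nat -> H)) := (LTi (v.1 - Y v.2), LSi v.2).

Lemma block_sim_bounded : bdK LT -> bdH LS -> sum_bd block_sim.
Proof.
move=> LT_bdd LS_bdd; have [_ linY _] := Y_bdd.
have [[_ linLT _] [LS2 linLS _]] := (LT_bdd, LS_bdd).
have [cY cY0 Y_le] := bounded_op_nonneg (l2_norm_ge0 ipH) Y_bdd.
have [cT cT0 LT_le] := bounded_op_nonneg (ipnorm_ge0 ipK) LT_bdd.
have [cS cS0 LS_le] := bounded_op_nonneg (l2_norm_ge0 ipH) LS_bdd.
split; [by move=> v /LS2 | | exists (cT + cY * cS + cS) => v v2].
  move=> a u v u2 v2; rewrite /block_sim [RHS]surjective_pairing /=.
  by rewrite linLT // linLS // (linY _ _ _ (LS2 _ u2) (LS2 _ v2)) scalerDr addrACA.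
apply: sum_norm_le_lin; rewrite /= ?mulr_ge0 //; [exact: LS2 | | exact: LS_le].
apply: le_trans (ler_ipnormD hipK _ _) _; apply: lerD; first exact: LT_le.
by apply: le_trans (Y_le _ (LS2 _ v2)) _; rewrite -mulrA ler_wpM2l ?LS_le.
Qed.

Lemma block_sim_inv_bounded : bdK LTi -> bdH LSi -> sum_bd block_sim_inv.
Proof.
move=> LTi_bdd LSi_bdd; have [_ linY _] := Y_bdd.
have [[_ linLTi _] [LSi2 linLSi _]] := (LTi_bdd, LSi_bdd).
have [cY cY0 Y_le] := bounded_op_nonneg (l2_norm_ge0 ipH) Y_bdd.
have [cT cT0 LTi_le] := bounded_op_nonneg (ipnorm_ge0 ipK) LTi_bdd.
have [cS cS0 LSi_le] := bounded_op_nonneg (l2_norm_ge0 ipH) LSi_bdd.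
split; [by move=> v /LSi2 | | exists (cT + cT * cY + cS) => v v2].
  move=> a u v u2 v2; rewrite /block_sim_inv [RHS]surjective_pairing /=.
  by rewrite linLSi // linY // opprD addrACA -scalerBr linLTi.
apply: sum_norm_le_lin; rewrite /= ?mulr_ge0 //; [exact: LSi2 | | exact: LSi_le].
apply: le_trans (LTi_le _ I) _; rewrite -mulrA -mulrDr ler_wpM2l //.
apply: le_trans (ler_ipnormD hipK _ _) _; rewrite ipnormN // lerD2l.
exact: Y_le.
Qed.

Lemma block_simK :
    (forall k, True -> LTi (LT k) = k /\ LT (LTi k) = k) ->
    (forall x, l2_mem ipH x -> LSi (LS x) = x /\ LS (LSi x) = x) ->
  forall v, sum_mem ipH v ->
    block_sim_inv (block_sim v) = v /\ block_sim (block_sim_inv v) = v.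
Proof.
move=> LTK LSK [k x] /= x2; have [LSiK LSKi] := LSK x x2.
by rewrite /block_sim /block_sim_inv /= addrK LSiK (LTK _ I).1 LSKi (LTK _ I).2 subrK.
Qed.

Variables (T : K -> K) (X : (nat -> H) -> K) (w : nat -> R).

Lemma block_sim_conj v : linear_on (fun _ => True) T ->
    (forall x, l2_mem ipH x -> l2_mem ipH (LS x)) ->
    (forall x, l2_mem ipH x -> Y (wshift w x) = T (Y x) + X x) ->
  sum_mem ipH v ->
  block_sim_inv (RX T X w (block_sim v)) = (LTi (T (LT v.1)), LSi (wshift w (LS v.2))).
Proof.
move=> linT LS2 YS v2; rewrite /block_sim_inv /RX /block_sim /= (YS _ (LS2 _ v2)).
by rewrite (linear_onD linT) // -[T (LT _) + _ + _]addrA addrK.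
Qed.

End TriangularSimilarity.

Theorem triangular_similar_to_contraction (R : realType) (H K : lmodType R[i])
    (ipH : H -> H -> R[i]) (ipK : K -> K -> R[i])
    (hipK : inner_product ipK) (w : nat -> R)
    (T : K -> K) (X : (nat -> H) -> K) (Y : (nat -> H) -> K) :
    bounded_op (fun _ => True) (ipnorm ipK) (fun _ => True) (ipnorm ipK) T ->
    similar_to_contraction (fun _ => True) (ipnorm ipK) T ->
    (forall x, l2_mem ipH x -> l2_mem ipH (wshift w x)) ->
    similar_to_contraction (l2_mem ipH) (l2_norm ipH) (wshift w) ->
    bounded_op (l2_mem ipH) (l2_norm ipH) (fun _ => True) (ipnorm ipK) Y ->
    (forall x, l2_mem ipH x -> Y (wshift w x) = T (Y x) + X x) ->
  similar_to_contraction (sum_mem ipH) (sum_norm ipK ipH) (RX T X w).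
Proof.
move=> [_ linT _] [LT [LTi [LT_bdd LTi_bdd LTK T_contr]]] S2.
move=> [LS [LSi [LS_bdd LSi_bdd LSK S_contr]]] Y_bdd YS.
have [[LS2 _ _] [LSi2 _ _]] := (LS_bdd, LSi_bdd).
exists (block_sim Y LT LS), (block_sim_inv Y LTi LSi); split.
- exact: block_sim_bounded.
- exact: block_sim_inv_bounded.
- exact: block_simK.
- move=> v v2; rewrite (block_sim_conj LT LTi LSi linT LS2 YS v2).
  apply: sum_norm_le => /=.
  + exact/LSi2/S2/LS2.
  + exact: v2.
  + exact: T_contr.
  + exact: S_contr.
Qed.

Lemma intertwiner_of_near (R : realType) (H K : lmodType R[i])
    (ipH : H -> H -> R[i]) (ipK : K -> K -> R[i])
    (hipH : inner_product ipH) (hK : hilbert_space ipK)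
    (w : nat -> R) (w_pos : forall k, 0 < w k) (M : R) (wM : forall k, w k <= M)
    (T : K -> K) (X : (nat -> H) -> K) (s : R) :
    bounded_op (fun _ => True) (ipnorm ipK) (fun _ => True) (ipnorm ipK) T ->
    bounded_op (l2_mem ipH) (l2_norm ipH) (fun _ => True) (ipnorm ipK) X ->
    (forall N (x : nat -> H), sum_norm ipK ipH
        (\sum_(n < N.+1) ((beta w n)^-1)%:C%C *:
           (iter n (RX T X w) (embH0 K (x n)) - iter n (R0 T w) (embH0 K (x n))))
      <= s * Num.sqrt (\sum_(n < N.+1) ipnorm ipH (x n) ^+ 2)) ->
  exists Y, bounded_op (l2_mem ipH) (l2_norm ipH) (fun _ => True) (ipnorm ipK) Y /\
    forall x, l2_mem ipH x -> Y (wshift w x) = T (Y x) + X x.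
Proof.
move=> [_ linT [cT T_le]] [_ linX [cX X_le]] near.
have Ysum_le := near_Ysum_le hipH hK linT near.
have s0 := normr_ge0 s.
exists (Ylim ipK w T X); split; first split => //.
- exact: (Ylim_linear hipH hK linT linX s0 Ysum_le).
- by exists `|s| => x; apply: (Ylim_le hipH hK linT linX s0 Ysum_le).
- move=> x; apply: (Ylim_wshift hipH hK w_pos linT linX s0 Ysum_le wM _ X_le).
  by move=> u; apply: T_le.
Qed.

Theorem theorem4p7 (R : realType)
    (H : lmodType R[i]) (ipH : H -> H -> R[i]) (hH : hilbert_space ipH)
    (K : lmodType R[i]) (ipK : K -> K -> R[i]) (hK : hilbert_space ipK)
    (w : nat -> R) (w_pos : forall k, 0 < w k)
    (hbeta : exists M : R, forall n k : nat, beta w (n + k) / beta w n <= M)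
    (T : K -> K)
    (T_bdd : bounded_op (fun _ => True) (ipnorm ipK) (fun _ => True) (ipnorm ipK) T)
    (T_sim : similar_to_contraction (fun _ => True) (ipnorm ipK) T)
    (X : (nat -> H) -> K)
    (X_bdd : bounded_op (l2_mem ipH) (l2_norm ipH) (fun _ => True) (ipnorm ipK) X)
    (hnear : exists s : R, forall (N : nat) (x : nat -> H),
        sum_norm ipK ipH
          (\sum_(n < N.+1) (((beta w n)^-1)%:C)%C *:
              (iter n (RX T X w) (embH0 K (x n)) - iter n (R0 T w) (embH0 K (x n))))
        <= s * Num.sqrt (\sum_(n < N.+1) ipnorm ipH (x n) ^+ 2)) :
  similar_to_contraction (@sum_mem R K H ipH) (sum_norm ipK ipH) (RX T X w).
Proof.
have [[hipH _] [hipK _]] := (hH, hK).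
have [M ratio_le] := hbeta; have [s near] := hnear.
have w_le := weight_le_ratio_bound w_pos ratio_le.
have [Y [Y_bdd YS]] := intertwiner_of_near hipH hK w_pos w_le T_bdd X_bdd near.
apply: (triangular_similar_to_contraction hipK T_bdd T_sim _ _ Y_bdd YS).
- by move=> x; apply: (l2_wshift hipH w_pos w_le).
- exact: (wshift_similar_to_contraction hipH w_pos ratio_le).
Qed.
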